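(* Let $A_p\in C[0,\infty)$ be real-valued and consider the Maxwell--Bloch system on $\mathbb X=\mathbb R^2\times S^3$, \[ \dot A=B,\quad \dot B=-\Omega^2A-\sigma B+cj,\quad i\hbar\dot C_1=\hbar\omega_1C_1+iaC_2,\quad i\hbar\dot C_2=\hbar\omega_2C_2-iaC_1, \] with $j=2q\,\mathrm{Im}[\overline{C_1}C_2]$, $a(t)=\frac qc[A(t)+A_p(t)]$. Let $\dot Y(t)=F(Y(t),t)$, $t\ge0$, be the induced reduced dynamics on $\mathbb Y=\mathbb X/U(1)=\mathbb R^2\times S^2$. Then for every $Y_0\in\mathbb Y$ the reduced equation admits a unique global solution $Y(t)=(A(t),B(t),C_*(t))$, $t\ge0$, with $Y(0)=Y_0$.
   Context: Parameters: $\Omega,\sigma,c,\hbar,p>0$, real $\omega_2>\omega_1$, $\omega=\omega_2-\omega_1$, $q=\omega p$. Here $S^3=\{C=(C_1,C_2)\in\mathbb C^2:|C_1|^2+|C_2|^2=1\}$. The group $U(1)$ acts on $\mathbb X$ by $g(\theta)(A,B,C)=(A,B,e^{i\theta}C)$; this action commutes with the Maxwell--Bloch flow. The quotient $\mathbb Y=\mathbb X/U(1)$ is identified with $\mathbb R^2\times S^2$ via the map $\Pi(A,B,C)=(A,B,h(C))$, where $h:S^3\to S^2$ is the Hopf fibration, $C_*=h(C)$. The reduced dynamics $\dot Y=F(Y,t)$ is the time-dependent vector field on $\mathbb Y$ (smooth in $Y$, continuous in $t$) obtained by pushing forward the Maxwell--Bloch vector field under $\Pi$, so that $\Pi$ maps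 Maxwell--Bloch solutions to solutions of the reduced equation. *)

From Stdlib Require Import Reals ClassicalEpsilon.
From Coquelicot Require Import Coquelicot.
Open Scope R_scope.

(* A complex pair C = (C1, C2) in C^2 is stored in real coordinates
   ((x1, y1), (x2, y2)) with C1 = x1 + i y1, C2 = x2 + i y2. *)
Definition C2R := ((R * R) * (R * R))%type.
(* Phase space X = R^2 x S^3 (ambient R^2 x C^2). *)
Definition Xstate := ((R * R) * C2R)%type.
(* Reduced space Y = R^2 x S^2 (ambient R^2 x R^3). *)
Definition Ystate := ((R * R) * (R * R * R))%type.

Definition onS3 (C : C2R) : Prop :=
  let '((x1, y1), (x2, y2)) := C in x1^2 + y1^2 + x2^2 + y2^2 = 1.

Definition onS2 (v : R * R * R) : Prop :=
  let '(u1, u2, u3) := v in u1^2 + u2^2 + u3^2 = 1.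

(* Hopf fibration h : S^3 -> S^2,
   h(C) = (2 Re(conj C1 C2), 2 Im(conj C1 C2), |C1|^2 - |C2|^2). *)
Definition hopf (C : C2R) : R * R * R :=
  let '((x1, y1), (x2, y2)) := C in
  (2 * (x1 * x2 + y1 * y2), 2 * (x1 * y2 - y1 * x2),
   x1^2 + y1^2 - x2^2 - y2^2).

Definition Pi (X : Xstate) : Ystate := (fst X, hopf (snd X)).

Definition imC1C2 (C : C2R) : R :=
  let '((x1, y1), (x2, y2)) := C in x1 * y2 - y1 * x2.

(* The Maxwell--Bloch vector field V(X,t) on X:
     A' = B,  B' = -Om^2 A - sig B + c j,
     i hb C1' = hb w1 C1 + i a C2,  i hb C2' = hb w2 C2 - i a C1,
   j = 2 q Im[conj C1 C2],  a(t) = (q/c)(A + Ap t),  q = (w2 - w1) p.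
   In real coordinates: C1' = -i w1 C1 + (a/hb) C2, C2' = -i w2 C2 - (a/hb) C1. *)
Definition MBfield (Om sig c hb p w1 w2 : R) (Ap : R -> R)
    (X : Xstate) (t : R) : Xstate :=
  let q := (w2 - w1) * p in
  let '((A, B), C) := X in
  let '((x1, y1), (x2, y2)) := C in
  let j := 2 * q * imC1C2 C in
  let a := q / c * (A + Ap t) in
  ((B, - Om^2 * A - sig * B + c * j),
   ((w1 * y1 + a / hb * x2, - w1 * x1 + a / hb * y2),
    (w2 * y2 - a / hb * x1, - w2 * x2 - a / hb * y1))).

Definition C2shift (C V : C2R) (s : R) : C2R :=
  let '((x1, y1), (x2, y2)) := C in
  let '((v1, w1), (v2, w2)) := V in
  ((x1 + s * v1, y1 + s * w1), (x2 + s * v2, y2 + s * w2)).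

Definition dhopf (C V : C2R) : R * R * R :=
  (Derive (fun s => fst (fst (hopf (C2shift C V s)))) 0,
   Derive (fun s => snd (fst (hopf (C2shift C V s)))) 0,
   Derive (fun s => snd (hopf (C2shift C V s))) 0).

Definition dPi (X W : Xstate) : Ystate := (fst W, dhopf (snd X) (snd W)).

(* Reduced vector field F(Y,t): push-forward of the Maxwell--Bloch field
   under Pi, i.e. the value dPi(X)[V(X,t)] for a point X in R^2 x S^3 with
   Pi X = Y (independent of the choice of X by U(1)-equivariance).
   Off the state space (C_* not on S^2) the value is irrelevant. *)
Definition Fred (Om sig c hb p w1 w2 : R) (Ap : R -> R)
    (Y : Ystate) (t : R) : Ystate :=
  epsilon (inhabits Y)
    (fun W => exists X : Xstate, onS3 (snd X) /\ Pi X = Y /\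
       W = dPi X (MBfield Om sig c hb p w1 w2 Ap X t)).

Definition nonnegR (t : R) : Prop := 0 <= t.

Definition reduced_solution (Om sig c hb p w1 w2 : R) (Ap : R -> R)
    (Y0 : Ystate) (Y : R -> Ystate) : Prop :=
  Y 0 = Y0 /\
  (forall t, 0 <= t -> onS2 (snd (Y t))) /\
  (forall t, 0 <= t ->
     filterdiff Y (within nonnegR (locally t))
       (fun h => scal h (Fred Om sig c hb p w1 w2 Ap (Y t) t))).

From Stdlib Require Import Reals Lra Lia Psatz ClassicalEpsilon FunctionalExtensionality PropExtensionality.
From Coquelicot Require Import Coquelicot.
Open Scope R_scope.

(* On S^2 the pushed-forward field is explicit (computed through a right inverse of the Hopf
   map): A'' + sig A' + Om^2 A = c q u2 is a damped oscillator forced by a bounded term, and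
   the Bloch vector u rotates with an angular velocity affine in A + Ap. The field is only
   locally Lipschitz, so it is cut off outside {|A| <= R} x S^2; the cut-off field is globally
   Lipschitz, Picard iteration solves it on [0, N], and Gronwall's inequality makes solutions
   unique. Along the cut-off flow |u| is conserved and the energy B^2 + Om^2 A^2 grows at most
   like e^t, so for R chosen from this bound the cut-off is never active. The solutions on
   [0, N], N >= 0, therefore solve the reduced equation, agree where they overlap, and glue to
   the global solution. *)

(* [Ystate] is used as R^5 through [coord]; every index [i >= 4] gives the last coordinate. *)
Definition coord (i : nat) (y : Ystate) : R :=
  match i with
  | O => fst (fst y) | 1%nat => snd (fst y) | 2%nat => fst (fst (snd y))
  | 3%nat => snd (fst (snd y)) | _ => snd (snd y)
  end.

Definition of_coords (f : nat -> R) : Ystate := ((f 0%nat, f 1%nat), ((f 2%nat, f 3%nat), f 4%nat)).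

Lemma coord_of_coords (h : (Ystate -> R) -> R) i :
  coord i (of_coords (fun j => h (coord j))) = h (coord i).
Proof. now destruct i as [|[|[|[|[|i]]]]]. Qed.

Lemma Ystate_ext (y z : Ystate) : (forall i, coord i y = coord i z) -> y = z.
Proof.
  destruct y as [[a b] [[c d] e]], z as [[a' b'] [[c' d'] e']]; intros H.
  pose proof (H 0%nat); pose proof (H 1%nat); pose proof (H 2%nat);
  pose proof (H 3%nat); pose proof (H 4%nat); simpl in *; congruence.
Qed.

Definition dist1 (y z : Ystate) : R :=
  Rabs (coord 0 y - coord 0 z) + Rabs (coord 1 y - coord 1 z) + Rabs (coord 2 y - coord 2 z)
  + Rabs (coord 3 y - coord 3 z) + Rabs (coord 4 y - coord 4 z).

Lemma coord_le_dist1 y z i : Rabs (coord i y - coord i z) <= dist1 y z.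
Proof.
  unfold dist1.
  pose proof (Rabs_pos (coord 0 y - coord 0 z)); pose proof (Rabs_pos (coord 1 y - coord 1 z));
  pose proof (Rabs_pos (coord 2 y - coord 2 z)); pose proof (Rabs_pos (coord 3 y - coord 3 z));
  pose proof (Rabs_pos (coord 4 y - coord 4 z)).
  destruct i as [|[|[|[|i]]]]; cbn [coord] in *; lra.
Qed.

Lemma dist1_ge0 y z : 0 <= dist1 y z.
Proof. eapply Rle_trans; [apply Rabs_pos | apply (coord_le_dist1 y z 0)]. Qed.

Lemma dist1_le y z d : (forall i, Rabs (coord i y - coord i z) <= d) -> dist1 y z <= 5 * d.
Proof.
  intros H; unfold dist1.
  pose proof (H 0%nat); pose proof (H 1%nat); pose proof (H 2%nat); pose proof (H 3%nat);
  pose proof (H 4%nat); lra.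
Qed.

Definition sqdist (y z : Ystate) : R :=
  Rsqr (coord 0 y - coord 0 z) + Rsqr (coord 1 y - coord 1 z) + Rsqr (coord 2 y - coord 2 z)
  + Rsqr (coord 3 y - coord 3 z) + Rsqr (coord 4 y - coord 4 z).

Lemma sum5_sq_le a b c d e : Rsqr (a + b + c + d + e) <= 5 * (a² + b² + c² + d² + e²).
Proof.
  pose proof (Rle_0_sqr (a - b)); pose proof (Rle_0_sqr (a - c)); pose proof (Rle_0_sqr (a - d));
  pose proof (Rle_0_sqr (a - e)); pose proof (Rle_0_sqr (b - c)); pose proof (Rle_0_sqr (b - d));
  pose proof (Rle_0_sqr (b - e)); pose proof (Rle_0_sqr (c - d)); pose proof (Rle_0_sqr (c - e));
  pose proof (Rle_0_sqr (d - e)); unfold Rsqr in *; lra.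
Qed.

Lemma dist1_sq_le y z : Rsqr (dist1 y z) <= 5 * sqdist y z.
Proof. unfold sqdist; rewrite !(Rsqr_abs (coord _ y - coord _ z)); apply sum5_sq_le. Qed.

Lemma sqdist_le0 y z : sqdist y z <= 0 -> y = z.
Proof.
  unfold sqdist; intros H; apply Ystate_ext; intros i.
  pose proof (Rle_0_sqr (coord 0 y - coord 0 z)); pose proof (Rle_0_sqr (coord 1 y - coord 1 z));
  pose proof (Rle_0_sqr (coord 2 y - coord 2 z)); pose proof (Rle_0_sqr (coord 3 y - coord 3 z));
  pose proof (Rle_0_sqr (coord 4 y - coord 4 z)).
  destruct i as [|[|[|[|i]]]]; cbn [coord] in *; unfold Rsqr in *; nra.
Qed.
(** * Real analysis *)

Lemma continuous_eps (f : R -> R) x : continuous f x ->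
  forall eps, 0 < eps -> exists d, 0 < d /\ forall y, Rabs (y - x) < d -> Rabs (f y - f x) < eps.
Proof.
  intros H eps He; apply continuity_pt_filterlim in H.
  destruct (H eps He) as [d [Hd Hd']]; exists d; split; auto; intros y Hy.
  destruct (Req_dec y x) as [->|Hne].
  - unfold Rminus; rewrite Rplus_opp_r, Rabs_R0; auto.
  - apply (Hd' y); repeat split; auto.
Qed.

Lemma continuous_of_eps (f : R -> R) x :
  (forall eps, 0 < eps -> exists d, 0 < d /\ forall y, Rabs (y - x) < d -> Rabs (f y - f x) < eps) ->
  continuous f x.
Proof.
  intros H; apply continuity_pt_filterlim; intros eps He.
  destruct (H eps He) as [d [Hd Hd']]; exists d; split; auto; intros y [_ Hy]; apply Hd', Hy.
Qed.

Lemma continuous_Rplus_comp (f g : R -> R) x :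
  continuous f x -> continuous g x -> continuous (fun s => f s + g s) x.
Proof. apply (continuous_plus f g). Qed.

Lemma continuous_Rmult_comp (f g : R -> R) x :
  continuous f x -> continuous g x -> continuous (fun s => f s * g s) x.
Proof. apply (continuous_mult f g). Qed.

Lemma continuous_Ropp_comp (f : R -> R) x : continuous f x -> continuous (fun s => - f s) x.
Proof. apply (continuous_opp f). Qed.

Lemma continuous_bounded_on (g : R -> R) a b : a <= b -> (forall s, continuous g s) ->
  exists M, forall s, a <= s <= b -> Rabs (g s) <= M.
Proof.
  intros Hab Hg.
  destruct (continuity_ab_maj (fun s => Rabs (g s)) a b Hab) as [m [Hm _]].
  - intros s _; apply continuity_pt_filterlim, continuous_Rabs_comp, Hg.
  - exists (Rabs (g m)); exact Hm.
Qed.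

Lemma exp_le x y : x <= y -> exp x <= exp y.
Proof. intros [H| ->]; [left; apply exp_increasing, H | right; reflexivity]. Qed.

Lemma is_derive_value (f : R -> R) (x l l' : R) : is_derive f x l -> l = l' -> is_derive f x l'.
Proof. now intros H <-. Qed.

Lemma is_derive_Rplus (f g : R -> R) (x df dg : R) :
  is_derive f x df -> is_derive g x dg -> is_derive (fun s => f s + g s) x (df + dg).
Proof. apply (is_derive_plus f g). Qed.

Lemma is_derive_Rmult (f g : R -> R) (x df dg : R) :
  is_derive f x df -> is_derive g x dg -> is_derive (fun s => f s * g s) x (df * g x + f x * dg).
Proof. intros; apply (is_derive_mult f g); auto; intros; apply Rmult_comm. Qed.

Lemma is_derive_exp_lin (a x : R) : is_derive (fun s => exp (a * s)) x (a * exp (a * x)).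
Proof. auto_derive; auto; ring. Qed.

Definition right_continuous0 (g : R -> R) : Prop :=
  filterlim g (within nonnegR (locally 0)) (locally (g 0)).

Lemma right_continuous0_of_continuous g : continuous g 0 -> right_continuous0 g.
Proof.
  intros Hg P HP; apply Hg in HP; unfold filtermap, within in *.
  revert HP; apply filter_imp; auto.
Qed.

Lemma right_continuous0_plus f g :
  right_continuous0 f -> right_continuous0 g -> right_continuous0 (fun x => f x + g x).
Proof.
  intros Hf Hg; apply (filterlim_comp_2 f g Rplus Hf Hg).
  apply (filterlim_plus (K := R_AbsRing) (f 0) (g 0)).
Qed.

Lemma right_continuous0_mult f g :
  right_continuous0 f -> right_continuous0 g -> right_continuous0 (fun x => f x * g x).
Proof.
  intros Hf Hg; apply (filterlim_comp_2 f g Rmult Hf Hg).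
  apply (filterlim_mult (K := R_AbsRing) (f 0) (g 0)).
Qed.

Lemma right_continuous0_opp f : right_continuous0 f -> right_continuous0 (fun x => - f x).
Proof.
  intros Hf; apply (filterlim_comp _ _ _ f Ropp _ _ _ Hf).
  apply (filterlim_opp (K := R_AbsRing) (f 0)).
Qed.

Lemma right_continuous0_minus f g :
  right_continuous0 f -> right_continuous0 g -> right_continuous0 (fun x => f x - g x).
Proof. intros; apply right_continuous0_plus, right_continuous0_opp; auto. Qed.

(* The mean value theorem on [e, t] for every e > 0, then e -> 0+ by right continuity. *)
Lemma derive_nonpos_le0 (g dg : R -> R) T :
  (forall t, 0 < t < T -> is_derive g t (dg t)) -> (forall t, 0 < t < T -> dg t <= 0) ->
  right_continuous0 g -> forall t, 0 <= t < T -> g t <= g 0.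
Proof.
  intros Hd Hneg Hrc t Ht.
  destruct (Req_dec t 0) as [->|Ht0]; [lra|].
  assert (Hle : forall e, 0 < e <= t -> g t <= g e).
  { intros e He; destruct (Req_dec e t) as [->|Hne]; [lra|].
    destruct (MVT_gen g e t dg) as [x [Hx Heq]].
    - intros x Hx; rewrite Rmin_left, Rmax_right in Hx by lra; apply Hd; lra.
    - intros x Hx; rewrite Rmin_left, Rmax_right in Hx by lra.
      apply continuity_pt_filterlim, (ex_derive_continuous (K := R_AbsRing) (V := R_NormedModule)).
      exists (dg x); apply Hd; lra.
    - rewrite Rmin_left, Rmax_right in Hx by lra.
      assert (dg x <= 0) by (apply Hneg; lra); nra. }
  destruct (Rle_or_lt (g t) (g 0)) as [H|H]; auto; exfalso.
  destruct (proj1 (filterlim_locally _ _) Hrc (mkposreal (g t - g 0) ltac:(lra))) as [d Hd'].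
  pose proof (cond_pos d) as Hdpos.
  set (e := Rmin (d / 2) t).
  assert (He : 0 < e <= t) by (split; [apply Rmin_glb_lt | apply Rmin_r]; lra).
  assert (Hb : ball 0 d e).
  { change (Rabs (e - 0) < d); rewrite Rminus_0_r, Rabs_pos_eq by lra.
    eapply Rle_lt_trans; [apply Rmin_l | lra]. }
  specialize (Hd' e Hb ltac:(unfold nonnegR; lra)); change (Rabs (g e - g 0) < g t - g 0) in Hd'.
  apply Rabs_lt_between in Hd'; specialize (Hle e He); lra.
Qed.

Lemma derive0_const (g : R -> R) T :
  (forall t, 0 < t < T -> is_derive g t 0) -> right_continuous0 g ->
  forall t, 0 <= t < T -> g t = g 0.
Proof.
  intros Hd Hrc t Ht.
  assert (g t <= g 0) by (apply (derive_nonpos_le0 g (fun _ => 0) T); auto; intros; lra).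
  assert (- g t <= - g 0).
  { apply (derive_nonpos_le0 (fun s => - g s) (fun _ => 0) T); auto; [|intros; lra|].
    - intros s Hs; apply (is_derive_value _ _ (opp 0)); [apply (is_derive_opp g), Hd, Hs|].
      unfold opp; simpl; ring.
    - apply right_continuous0_opp, Hrc. }
  lra.
Qed.

(* Apply [derive_nonpos_le0] to exp (- K s) * E s. *)
Lemma gronwall_le (E dE : R -> R) K T :
  (forall t, 0 < t < T -> is_derive E t (dE t)) -> (forall t, 0 < t < T -> dE t <= K * E t) ->
  right_continuous0 E -> forall t, 0 <= t < T -> E t <= E 0 * exp (K * t).
Proof.
  intros Hd Hle Hr t Ht.
  assert (Hm : exp (- K * t) * E t <= exp (- K * 0) * E 0).
  { apply (derive_nonpos_le0 (fun s => exp (- K * s) * E s) (fun s => exp (- K * s) * (dE s - K * E s)) T);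
      auto.
    - intros s Hs; eapply is_derive_value;
        [apply is_derive_Rmult; [apply is_derive_exp_lin | apply Hd, Hs] | cbv beta; ring].
    - intros s Hs; pose proof (exp_pos (- K * s)); specialize (Hle s Hs).
      rewrite <- (Rmult_0_r (exp (- K * s))); apply Rmult_le_compat_l; lra.
    - apply right_continuous0_mult; auto.
      apply right_continuous0_of_continuous, (ex_derive_continuous (K := R_AbsRing) (V := R_NormedModule)).
      eexists; apply is_derive_exp_lin. }
  rewrite Rmult_0_r, exp_0, Rmult_1_l in Hm.
  apply Rmult_le_compat_r with (r := exp (K * t)) in Hm; [|left; apply exp_pos].
  rewrite Rmult_comm, <- Rmult_assoc, <- exp_plus in Hm.
  replace (K * t + - K * t) with 0 in Hm by ring; rewrite exp_0, Rmult_1_l in Hm; exact Hm.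
Qed.

Lemma ex_RInt_continuous_R (g : R -> R) a b : (forall s, continuous g s) -> ex_RInt g a b.
Proof. intros Hg; apply (ex_RInt_continuous (V := R_CompleteNormedModule)); intros; apply Hg. Qed.

Lemma is_derive_primitive (g : R -> R) : (forall s, continuous g s) ->
  forall x, is_derive (fun t => RInt g 0 t) x (g x).
Proof.
  intros Hg x; apply is_derive_RInt with (a := 0); [|apply Hg].
  apply filter_forall; intros b; apply (RInt_correct (V := R_CompleteNormedModule)).
  apply ex_RInt_continuous_R, Hg.
Qed.

Lemma continuous_primitive (g : R -> R) : (forall s, continuous g s) ->
  forall x, continuous (fun t => RInt g 0 t) x.
Proof.
  intros Hg x; apply (ex_derive_continuous (K := R_AbsRing) (V := R_NormedModule)).
  eexists; apply is_derive_primitive, Hg.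
Qed.

Lemma abs_RInt_le (g h : R -> R) x Ih : 0 <= x -> ex_RInt g 0 x -> is_RInt h 0 x Ih ->
  (forall s, 0 <= s <= x -> Rabs (g s) <= h s) -> Rabs (RInt g 0 x) <= Ih.
Proof.
  intros; apply (norm_RInt_le g h 0 x); auto.
  apply (RInt_correct (V := R_CompleteNormedModule)); auto.
Qed.

Lemma abs_RInt_le_const (g : R -> R) x C : 0 <= x -> ex_RInt g 0 x ->
  (forall s, 0 <= s <= x -> Rabs (g s) <= C) -> Rabs (RInt g 0 x) <= x * C.
Proof.
  intros; apply abs_RInt_le with (h := fun _ => C); auto.
  replace (x * C) with (scal (x - 0) C) by (unfold scal; simpl; unfold mult; simpl; ring).
  apply (is_RInt_const (V := R_NormedModule)).
Qed.

Lemma RInt_Rminus (f g : R -> R) a b : (forall s, continuous f s) -> (forall s, continuous g s) ->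
  RInt f a b - RInt g a b = RInt (fun s => f s - g s) a b.
Proof. intros; symmetry; apply (RInt_minus f g); apply ex_RInt_continuous_R; auto. Qed.

Lemma is_RInt_exp_lin K C x : 0 < K ->
  is_RInt (fun s => K * C * exp (2 * K * s)) 0 x (C / 2 * exp (2 * K * x) - C / 2).
Proof.
  intros HK.
  replace (C / 2 * exp (2 * K * x) - C / 2)
    with (minus (C / 2 * exp (2 * K * x)) (C / 2 * exp (2 * K * 0)))
    by (unfold minus, plus, opp; simpl; rewrite Rmult_0_r, exp_0; ring).
  apply (is_RInt_derive (fun s => C / 2 * exp (2 * K * s))).
  - intros; auto_derive; auto; field.
  - intros; apply (ex_derive_continuous (K := R_AbsRing) (V := R_NormedModule)); auto_derive; auto.
Qed.

Lemma div_pow2_lt C eps : 0 < eps -> exists N, C / 2 ^ N < eps.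
Proof.
  intros He.
  destruct (cv_pow_half C eps He) as [N HN].
  exists N; specialize (HN N (Nat.le_refl N)); unfold R_dist in HN.
  rewrite Rminus_0_r in HN; apply Rabs_def2 in HN; lra.
Qed.

Lemma eq0_of_le_div_pow2 X B : (forall n, Rabs X <= B / 2 ^ n) -> X = 0.
Proof.
  intros H; destruct (Req_dec X 0) as [|HX]; auto; exfalso.
  destruct (div_pow2_lt B (Rabs X)) as [N HN]; [apply Rabs_pos_lt, HX|].
  specialize (H N); lra.
Qed.

Lemma coord_linear i : is_linear (coord i).
Proof.
  destruct i as [|[|[|[|i]]]].
  - apply (is_linear_comp (fun y : Ystate => fst y) (fun y => fst y)); apply is_linear_fst.
  - apply (is_linear_comp (fun y : Ystate => fst y) (fun y => snd y));
      [apply is_linear_fst | apply is_linear_snd].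
  - apply (is_linear_comp (fun y : Ystate => snd y) (fun y => fst (fst y))); [apply is_linear_snd|].
    apply (is_linear_comp (fun y : R * R * R => fst y) (fun y => fst y)); apply is_linear_fst.
  - apply (is_linear_comp (fun y : Ystate => snd y) (fun y => snd (fst y))); [apply is_linear_snd|].
    apply (is_linear_comp (fun y : R * R * R => fst y) (fun y => snd y));
      [apply is_linear_fst | apply is_linear_snd].
  - apply (is_linear_comp (fun y : Ystate => snd y) (fun y => snd y)); apply is_linear_snd.
Qed.

Lemma filterdiff_coord (Z : R -> Ystate) (F : (R -> Prop) -> Prop) {FF : Filter F} W i :
  filterdiff Z F (fun h => scal h W) -> filterdiff (fun s => coord i (Z s)) F (fun h => scal h (coord i W)).
Proof.
  intros H; eapply filterdiff_ext_lin.
  - exact (filterdiff_comp Z (coord i) _ (coord i) H (filterdiff_linear (coord i) (coord_linear i))).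
  - intros h; destruct i as [|[|[|[|i]]]]; reflexivity.
Qed.

Lemma filterdiff_pair {U V : NormedModule R_AbsRing} (f : R -> U) (g : R -> V)
  (F : (R -> Prop) -> Prop) {FF : Filter F} lf lg :
  filterdiff f F lf -> filterdiff g F lg -> filterdiff (fun x => (f x, g x)) F (fun x => (lf x, lg x)).
Proof.
  intros Hf Hg; apply (filterdiff_comp_2 f g pair lf lg pair Hf Hg).
  apply filterdiff_ext with (f := fun y => y); [intros [a b]; reflexivity|].
  eapply filterdiff_ext_lin; [apply filterdiff_id | intros [a b]; reflexivity].
Qed.

Lemma filterdiff_of_coords (Z : R -> Ystate) t W :
  (forall i, is_derive (fun s => coord i (Z s)) t (coord i W)) ->
  filterdiff Z (locally t) (fun h => scal h W).
Proof.
  intros H.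
  pose proof (filterdiff_pair _ _ _ _ _ (filterdiff_pair _ _ _ _ _ (H 0%nat) (H 1%nat))
    (filterdiff_pair _ _ _ _ _ (filterdiff_pair _ _ _ _ _ (H 2%nat) (H 3%nat)) (H 4%nat))) as H5.
  eapply filterdiff_ext_lin; [eapply filterdiff_ext; [|exact H5]|].
  - intros y; simpl; destruct (Z y) as [[a b] [[c d] e]]; reflexivity.
  - intros h; destruct W as [[a b] [[c d] e]]; reflexivity.
Qed.

Lemma within_nonneg_lim t x : 0 <= t -> is_filter_lim (within nonnegR (locally t)) x -> x = t.
Proof.
  intros Ht Hx.
  assert (HF : ProperFilter' (within nonnegR (locally t))).
  { constructor; [|apply within_filter, locally_filter].
    intros H; apply locally_singleton in H; apply H, Ht. }
  apply (@is_filter_lim_unique _ _ _ HF); auto.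
  intros P HP; unfold within; revert HP; apply filter_imp; auto.
Qed.

Lemma filterdiff_within_nonneg (f : R -> Ystate) t l : 0 <= t ->
  filterdiff f (locally t) l -> filterdiff f (within nonnegR (locally t)) l.
Proof.
  intros Ht [Hl Hd]; split; auto; intros x Hx eps.
  apply within_nonneg_lim in Hx; auto; subst x.
  specialize (Hd t (fun P HP => HP) eps).
  unfold within; revert Hd; apply filter_imp; auto.
Qed.

Lemma within_nonneg_interior t : 0 < t -> within nonnegR (locally t) = locally t.
Proof.
  intros Ht; apply functional_extensionality; intros P; apply propositional_extensionality; split.
  - intros H.
    assert (Hp : locally t nonnegR).
    { exists (mkposreal t Ht); intros y Hy; apply Rabs_lt_between in Hy; simpl in Hy.
      unfold nonnegR; change (minus y t) with (y - t) in Hy; lra. }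
    unfold within in H; generalize (filter_and _ _ H Hp); apply filter_imp; intros x [H1 H2]; auto.
  - intros H; unfold within; revert H; apply filter_imp; auto.
Qed.

Lemma right_continuous0_of_filterdiff (Z : R -> Ystate) W :
  filterdiff Z (within nonnegR (locally 0)) (fun h => scal h W) ->
  forall i, right_continuous0 (fun s => coord i (Z s)).
Proof.
  intros H i.
  apply (filterdiff_continuous_aux (K := R_AbsRing) (U := R_NormedModule) (V := R_NormedModule)).
  - eexists; apply (filterdiff_coord Z _ W i H).
  - intros P HP; unfold within; revert HP; apply filter_imp; auto.
Qed.

(** * Picard iteration *)

Lemma dist1_diag y : dist1 y y = 0.
Proof. unfold dist1; rewrite !Rminus_diag, Rabs_R0; ring. Qed.

Definition lipschitz_field (G : R -> Ystate -> Ystate) (L : R) : Prop :=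
  forall s y z i, Rabs (coord i (G s y) - coord i (G s z)) <= L * dist1 y z.

Definition time_continuous_field (G : R -> Ystate -> Ystate) : Prop :=
  forall y i s, continuous (fun s => coord i (G s y)) s.

Definition continuous_path (y : R -> Ystate) : Prop :=
  forall i s, continuous (fun s => coord i (y s)) s.

Lemma continuous_dist1 y z s0 : continuous_path y -> continuous_path z ->
  continuous (fun s => dist1 (y s) (z s)) s0.
Proof.
  intros Hy Hz; unfold dist1.
  repeat apply continuous_Rplus_comp; apply continuous_Rabs_comp;
    apply continuous_Rplus_comp; try apply Hy; apply continuous_Ropp_comp, Hz.
Qed.

Lemma continuous_path_field G L : 0 <= L -> lipschitz_field G L -> time_continuous_field G ->
  forall y, continuous_path y -> continuous_path (fun s => G s (y s)).
Proof.
  intros HL0 HL HC y Hy i s0; apply continuous_of_eps; intros eps He.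
  set (e1 := eps / (2 * (L + 1))).
  assert (He1 : 0 < e1) by (apply Rdiv_lt_0_compat; lra).
  assert (Hee : 2 * (L + 1) * e1 = eps) by (unfold e1; field; lra).
  destruct (continuous_eps _ _ (continuous_dist1 y (fun _ => y s0) s0 Hy
    ltac:(intros j s'; apply continuous_const)) e1 He1) as [d1 [Hd1 H1]].
  destruct (continuous_eps _ _ (HC (y s0) i s0) (eps / 2)) as [d2 [Hd2 H2]]; [lra|].
  exists (Rmin d1 d2); split; [apply Rmin_pos; auto|]; intros s Hs.
  specialize (H1 s (Rlt_le_trans _ _ _ Hs (Rmin_l _ _))).
  specialize (H2 s (Rlt_le_trans _ _ _ Hs (Rmin_r _ _))).
  rewrite dist1_diag, Rminus_0_r, Rabs_pos_eq in H1 by apply dist1_ge0.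
  pose proof (HL s (y s) (y s0) i) as Hlip.
  assert (L * dist1 (y s) (y s0) <= L * e1) by (apply Rmult_le_compat_l; lra).
  replace (coord i (G s (y s)) - coord i (G s0 (y s0)))
    with ((coord i (G s (y s)) - coord i (G s (y s0))) + (coord i (G s (y s0)) - coord i (G s0 (y s0))))
    by ring.
  eapply Rle_lt_trans; [apply Rabs_triang|]; nra.
Qed.

Definition clip (T t : R) : R := Rmax 0 (Rmin T t).

Lemma clip_range T t : 0 <= T -> 0 <= clip T t <= T.
Proof. intros; unfold clip, Rmax, Rmin; repeat destruct Rle_dec; lra. Qed.

Lemma clip_id T t : 0 <= t <= T -> clip T t = t.
Proof. intros; unfold clip, Rmax, Rmin; repeat destruct Rle_dec; lra. Qed.

Lemma continuous_clip T t : continuous (clip T) t.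
Proof.
  apply continuous_of_eps; intros eps He; exists eps; split; auto; intros s Hs.
  eapply Rle_lt_trans; [|exact Hs].
  unfold clip, Rmax, Rmin; repeat destruct Rle_dec; unfold Rabs; repeat destruct Rcase_abs; lra.
Qed.

Section GeometricCauchy.

Variables (u : nat -> R) (C : R).
Hypothesis HC : 0 <= C.
Hypothesis Hstep : forall n, Rabs (u (S n) - u n) <= C / 2 ^ n.

Lemma geometric_tail n k : Rabs (u (n + k) - u n) <= 2 * C / 2 ^ n - 2 * C / 2 ^ (n + k).
Proof.
  pose proof (pow_lt 2 n ltac:(lra)).
  induction k as [|k IHk].
  - rewrite Nat.add_0_r, Rminus_diag, Rabs_R0; lra.
  - rewrite Nat.add_succ_r.
    replace (u (S (n + k)) - u n) with ((u (S (n + k)) - u (n + k)%nat) + (u (n + k)%nat - u n)) by ring.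
    eapply Rle_trans; [apply Rabs_triang|].
    pose proof (Hstep (n + k)%nat); pose proof (pow_lt 2 (n + k) ltac:(lra)).
    replace (2 * C / 2 ^ S (n + k)) with (C / 2 ^ (n + k)) by (simpl; field; lra).
    lra.
Qed.

Lemma geometric_dist n m : (n <= m)%nat -> Rabs (u m - u n) <= 2 * C / 2 ^ n.
Proof.
  intros Hnm; replace m with (n + (m - n))%nat by lia.
  pose proof (pow_lt 2 (n + (m - n)) ltac:(lra)).
  assert (0 <= 2 * C / 2 ^ (n + (m - n))) by (apply Rcomplements.Rdiv_le_0_compat; lra).
  pose proof (geometric_tail n (m - n)); lra.
Qed.

Lemma geometric_is_lim : is_lim_seq u (real (Lim_seq u)).
Proof.
  apply Lim_seq_correct', ex_lim_seq_cauchy_corr; intros eps.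
  destruct (div_pow2_lt (4 * C) eps (cond_pos eps)) as [N HN].
  exists N; intros n m Hn Hm.
  pose proof (geometric_dist N n Hn); pose proof (geometric_dist N m Hm).
  pose proof (pow_lt 2 N ltac:(lra)).
  replace (4 * C / 2 ^ N) with (2 * C / 2 ^ N + 2 * C / 2 ^ N) in HN by (field; lra).
  replace (u n - u m) with ((u n - u N) - (u m - u N)) by ring.
  eapply Rle_lt_trans; [apply Rabs_triang|]; rewrite Rabs_Ropp; lra.
Qed.

Lemma geometric_lim_dist n : Rabs (real (Lim_seq u) - u n) <= 2 * C / 2 ^ n.
Proof.
  assert (Hl : is_lim_seq (fun m => Rabs (u m - u n)) (Rabs (real (Lim_seq u) - u n))).
  { apply (is_lim_seq_abs _ (real (Lim_seq u) - u n)).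
    apply is_lim_seq_minus'; [apply geometric_is_lim | apply is_lim_seq_const]. }
  change (Rbar_le (Rabs (real (Lim_seq u) - u n)) (2 * C / 2 ^ n)).
  apply (is_lim_seq_le_loc _ (fun _ => 2 * C / 2 ^ n) _ _ (ltac:(exists n; apply geometric_dist)) Hl).
  apply is_lim_seq_const.
Qed.

End GeometricCauchy.

Definition coordwise_lim (f : nat -> R -> Ystate) (t : R) : Ystate :=
  of_coords (fun j => real (Lim_seq (fun k => coord j (f k t)))).

Section UniformLimit.

Variables (f : nat -> R -> Ystate) (C : R).
Hypothesis HC : 0 <= C.
Hypothesis Hstep : forall n i t, Rabs (coord i (f (S n) t) - coord i (f n t)) <= C / 2 ^ n.

Lemma coordwise_lim_dist n i t :
  Rabs (coord i (coordwise_lim f t) - coord i (f n t)) <= 2 * C / 2 ^ n.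
Proof.
  unfold coordwise_lim; rewrite (coord_of_coords (fun q => real (Lim_seq (fun k => q (f k t))))).
  apply (geometric_lim_dist (fun k => coord i (f k t)) C HC); intros; apply Hstep.
Qed.

Lemma coordwise_lim_continuous : (forall n, continuous_path (f n)) -> continuous_path (coordwise_lim f).
Proof.
  intros Hc i s0; apply continuous_of_eps; intros eps He.
  destruct (div_pow2_lt (2 * C) (eps / 3)) as [n Hn]; [lra|].
  destruct (continuous_eps _ _ (Hc n i s0) (eps / 3)) as [d [Hd Hd']]; [lra|].
  exists d; split; auto; intros s Hs; specialize (Hd' s Hs).
  pose proof (coordwise_lim_dist n i s); pose proof (coordwise_lim_dist n i s0).
  replace (coord i (coordwise_lim f s) - coord i (coordwise_lim f s0)) with
    ((coord i (coordwise_lim f s) - coord i (f n s)) + (coord i (f n s) - coord i (f n s0))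
     - (coord i (coordwise_lim f s0) - coord i (f n s0))) by ring.
  eapply Rle_lt_trans; [apply Rabs_triang|]; rewrite Rabs_Ropp.
  pose proof (Rabs_triang (coord i (coordwise_lim f s) - coord i (f n s))
    (coord i (f n s) - coord i (f n s0))).
  lra.
Qed.

End UniformLimit.

Section Picard.

Variables (G : R -> Ystate -> Ystate) (L T : R) (y0 : Ystate).
Hypothesis HL0 : 0 <= L.
Hypothesis HT : 0 <= T.
Hypothesis HL : lipschitz_field G L.
Hypothesis HC : time_continuous_field G.

(* Clipping the time to [0, T] keeps every iterate bounded on all of R. *)
Fixpoint picard_iter (n : nat) : R -> Ystate :=
  match n with
  | O => fun _ => y0
  | S m => fun t =>
      of_coords (fun j => coord j y0 + RInt (fun s => coord j (G s (picard_iter m s))) 0 (clip T t))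
  end.

Lemma picard_iter_S n i t : coord i (picard_iter (S n) t) =
  coord i y0 + RInt (fun s => coord i (G s (picard_iter n s))) 0 (clip T t).
Proof.
  apply (coord_of_coords (fun q => q y0 + RInt (fun s => q (G s (picard_iter n s))) 0 (clip T t))).
Qed.

Lemma picard_iter_continuous n : continuous_path (picard_iter n).
Proof.
  induction n as [|n IHn]; intros i s; [apply continuous_const|].
  apply continuous_ext with
    (f := fun t => coord i y0 + RInt (fun s => coord i (G s (picard_iter n s))) 0 (clip T t)).
  { intros; symmetry; apply picard_iter_S. }
  apply continuous_Rplus_comp; [apply continuous_const|].
  apply (continuous_comp (clip T) (fun t => RInt (fun s => coord i (G s (picard_iter n s))) 0 t)).
  - apply continuous_clip.
  - apply continuous_primitive; intros; apply (continuous_path_field G L); auto.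
Qed.

Lemma continuous_picard_field n i s : continuous (fun s => coord i (G s (picard_iter n s))) s.
Proof. apply (continuous_path_field G L HL0 HL HC), picard_iter_continuous. Qed.

(* Weighted by exp (2 K t) with K > 5 L, each Picard step halves the sup distance. *)
Lemma picard_iter_step M : 0 <= M -> (forall s i, 0 <= s <= T -> Rabs (coord i (G s y0)) <= M) ->
  forall n i t, Rabs (coord i (picard_iter (S n) t) - coord i (picard_iter n t))
    <= M * T / 2 ^ n * exp (2 * (5 * L + 1) * clip T t).
Proof.
  intros HM0 HM n; set (K := 5 * L + 1); induction n as [|n IHn]; intros i t;
    pose proof (clip_range T t HT) as Hx; rewrite picard_iter_S.
  - replace (coord i y0 + RInt (fun s => coord i (G s (picard_iter 0 s))) 0 (clip T t)
      - coord i (picard_iter 0 t)) with (RInt (fun s => coord i (G s y0)) 0 (clip T t))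
      by (cbn [picard_iter]; lra).
    eapply Rle_trans.
    { apply abs_RInt_le_const; [lra | apply ex_RInt_continuous_R; intros; apply HC |].
      intros s Hs; apply HM; lra. }
    assert (1 <= exp (2 * K * clip T t)) by (rewrite <- exp_0; apply exp_le; unfold K; nra).
    replace (M * T / 2 ^ 0) with (M * T) by (simpl; field).
    assert (clip T t * M <= T * M) by (apply Rmult_le_compat_r; lra).
    assert (0 <= M * T) by (apply Rmult_le_pos; lra); nra.
  - rewrite picard_iter_S; set (x := clip T t) in *.
    replace (coord i y0 + RInt (fun s => coord i (G s (picard_iter (S n) s))) 0 x
      - (coord i y0 + RInt (fun s => coord i (G s (picard_iter n s))) 0 x))
      with (RInt (fun s => coord i (G s (picard_iter (S n) s))) 0 x
            - RInt (fun s => coord i (G s (picard_iter n s))) 0 x) by ring.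
    rewrite RInt_Rminus by apply continuous_picard_field.
    set (Cn := M * T / 2 ^ n).
    assert (HCn : 0 <= Cn) by (apply Rcomplements.Rdiv_le_0_compat; [nra | apply pow_lt; lra]).
    eapply Rle_trans.
    { apply abs_RInt_le with (h := fun s => K * Cn * exp (2 * K * s));
        [lra | | apply is_RInt_exp_lin; unfold K; lra |].
      - apply (ex_RInt_minus (V := R_NormedModule)); apply ex_RInt_continuous_R, continuous_picard_field.
      - intros s Hs; eapply Rle_trans; [apply HL|].
        assert (Hd : dist1 (picard_iter (S n) s) (picard_iter n s) <= 5 * (Cn * exp (2 * K * s))).
        { apply dist1_le; intros j; pose proof (IHn j s) as Hj.
          rewrite (clip_id T s) in Hj by lra; exact Hj. }
        assert (0 <= Cn * exp (2 * K * s)) by (pose proof (exp_pos (2 * K * s)); nra).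
        assert (L * dist1 (picard_iter (S n) s) (picard_iter n s) <= L * (5 * (Cn * exp (2 * K * s))))
          by (apply Rmult_le_compat_l; auto).
        unfold K in *; nra. }
    replace (M * T / 2 ^ S n) with (Cn / 2) by (unfold Cn; simpl; field; apply pow_nonzero; lra).
    pose proof (exp_pos (2 * K * x)); lra.
Qed.

Lemma field_bounded_at_y0 : exists M, 0 <= M /\ forall s i, 0 <= s <= T -> Rabs (coord i (G s y0)) <= M.
Proof.
  destruct (continuous_bounded_on (fun s => dist1 (G s y0) (of_coords (fun _ => 0))) 0 T HT)
    as [M HM].
  { intros s; apply continuous_dist1; [intros j s'; apply HC | intros j s'; apply continuous_const]. }
  assert (HMi : forall s i, 0 <= s <= T -> Rabs (coord i (G s y0)) <= M).
  { intros s i Hs; specialize (HM s Hs); rewrite Rabs_pos_eq in HM by apply dist1_ge0.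
    pose proof (coord_le_dist1 (G s y0) (of_coords (fun _ => 0)) i) as Hi.
    replace (coord i (of_coords (fun _ => 0))) with 0 in Hi by (destruct i as [|[|[|[|i]]]]; reflexivity).
    rewrite Rminus_0_r in Hi; lra. }
  exists M; split; auto.
  pose proof (HMi 0 0%nat ltac:(lra)); pose proof (Rabs_pos (coord 0 (G 0 y0))); lra.
Qed.

Lemma picard_iter_geometric : exists C, 0 <= C /\
  forall n i t, Rabs (coord i (picard_iter (S n) t) - coord i (picard_iter n t)) <= C / 2 ^ n.
Proof.
  destruct field_bounded_at_y0 as [M [HM0 HM]].
  set (K := 5 * L + 1); exists (M * T * exp (2 * K * T)); split.
  { pose proof (exp_pos (2 * K * T)); repeat apply Rmult_le_pos; lra. }
  intros n i t; eapply Rle_trans; [apply (picard_iter_step M); auto|]; fold K.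
  pose proof (clip_range T t HT); pose proof (pow_lt 2 n ltac:(lra)).
  assert (exp (2 * K * clip T t) <= exp (2 * K * T)) by (apply exp_le; unfold K; nra).
  assert (0 <= M * T / 2 ^ n) by (apply Rcomplements.Rdiv_le_0_compat; nra).
  replace (M * T * exp (2 * K * T) / 2 ^ n) with (M * T / 2 ^ n * exp (2 * K * T)) by (field; lra).
  apply Rmult_le_compat_l; auto.
Qed.

Theorem picard_existence : exists y : R -> Ystate, continuous_path y /\
  forall i t, 0 <= t <= T -> coord i (y t) = coord i y0 + RInt (fun s => coord i (G s (y s))) 0 t.
Proof.
  destruct picard_iter_geometric as [C [HC0 Hstep]].
  set (y := coordwise_lim picard_iter).
  assert (Hyc : continuous_path y)
    by (apply (coordwise_lim_continuous _ C); auto; apply picard_iter_continuous).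
  exists y; split; auto; intros i t Ht.
  set (gy := fun s => coord i (G s (y s))).
  assert (Hgy : forall s, continuous gy s) by (intros; apply (continuous_path_field G L); auto).
  cut (coord i (y t) - coord i y0 - RInt gy 0 t = 0); [unfold gy; lra|].
  apply (eq0_of_le_div_pow2 _ (2 * C + 10 * T * L * C)); intros n.
  set (gn := fun s => coord i (G s (picard_iter n s))).
  replace (coord i (y t) - coord i y0 - RInt gy 0 t)
    with ((coord i (y t) - coord i (picard_iter (S n) t)) + (RInt gn 0 t - RInt gy 0 t))
    by (rewrite picard_iter_S, clip_id by auto; unfold gn; lra).
  eapply Rle_trans; [apply Rabs_triang|].
  pose proof (coordwise_lim_dist picard_iter C HC0 Hstep (S n) i t) as H1; fold y in H1.
  rewrite RInt_Rminus by (auto; apply continuous_picard_field).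
  assert (H2 : Rabs (RInt (fun s => gn s - gy s) 0 t) <= t * (L * (5 * (2 * C / 2 ^ n)))).
  { apply abs_RInt_le_const; [lra| |].
    - apply (ex_RInt_minus (V := R_NormedModule)); apply ex_RInt_continuous_R; auto.
      apply continuous_picard_field.
    - intros s Hs; eapply Rle_trans; [apply HL|]; apply Rmult_le_compat_l; auto.
      apply dist1_le; intros j; rewrite Rabs_minus_sym; apply (coordwise_lim_dist _ C); auto. }
  pose proof (pow_lt 2 n ltac:(lra)).
  assert (0 <= 2 * C / 2 ^ n) by (apply Rcomplements.Rdiv_le_0_compat; lra).
  assert (t * (L * (5 * (2 * C / 2 ^ n))) <= T * (L * (5 * (2 * C / 2 ^ n))))
    by (apply Rmult_le_compat_r; [apply Rmult_le_pos|]; lra).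
  replace (2 * C / 2 ^ S n) with (C / 2 ^ n) in H1 by (simpl; field; lra).
  replace ((2 * C + 10 * T * L * C) / 2 ^ n) with (2 * C / 2 ^ n + T * (L * (5 * (2 * C / 2 ^ n))))
    by (field; lra).
  assert (C / 2 ^ n <= 2 * C / 2 ^ n) by (unfold Rdiv; nra).
  lra.
Qed.

Definition integral_path (y : R -> Ystate) (s : R) : Ystate :=
  of_coords (fun j => coord j y0 + RInt (fun u => coord j (G u (y u))) 0 s).

Lemma is_derive_integral_path y : continuous_path y ->
  forall i t, is_derive (fun s => coord i (integral_path y s)) t (coord i (G t (y t))).
Proof.
  intros Hy i t.
  apply is_derive_ext with (f := fun s => coord i y0 + RInt (fun u => coord i (G u (y u))) 0 s).
  { intros s; symmetry; apply (coord_of_coords (fun q => q y0 + RInt (fun u => q (G u (y u))) 0 s)). }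
  eapply is_derive_value; [apply is_derive_Rplus; [apply (is_derive_const (K := R_AbsRing))|] | ].
  - apply is_derive_primitive; intros s; apply (continuous_path_field G L); auto.
  - unfold zero; simpl; ring.
Qed.

Corollary picard_lindelof : exists Z : R -> Ystate, Z 0 = y0 /\
  forall i t, 0 <= t <= T -> is_derive (fun s => coord i (Z s)) t (coord i (G t (Z t))).
Proof.
  destruct picard_existence as [y [Hyc Hy]].
  assert (Heq : forall t, 0 <= t <= T -> integral_path y t = y t).
  { intros t Ht; apply Ystate_ext; intros i; rewrite Hy by auto.
    apply (coord_of_coords (fun q => q y0 + RInt (fun u => q (G u (y u))) 0 t)). }
  exists (integral_path y); split.
  - apply Ystate_ext; intros i; unfold integral_path.
    rewrite (coord_of_coords (fun q => q y0 + RInt (fun u => q (G u (y u))) 0 0)), RInt_point.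
    unfold zero; simpl; ring.
  - intros i t Ht; rewrite Heq by auto; apply is_derive_integral_path, Hyc.
Qed.

End Picard.

(** * Uniqueness for Lipschitz fields *)

Definition dot_diff (y z u v : Ystate) : R :=
  (coord 0 y - coord 0 z) * (coord 0 u - coord 0 v) + (coord 1 y - coord 1 z) * (coord 1 u - coord 1 v)
  + (coord 2 y - coord 2 z) * (coord 2 u - coord 2 v) + (coord 3 y - coord 3 z) * (coord 3 u - coord 3 v)
  + (coord 4 y - coord 4 z) * (coord 4 u - coord 4 v).

Lemma dot_diff_lipschitz G L s y z : 0 <= L -> lipschitz_field G L ->
  dot_diff y z (G s y) (G s z) <= 5 * L * sqdist y z.
Proof.
  intros HL0 HL.
  assert (Hterm : forall i, (coord i y - coord i z) * (coord i (G s y) - coord i (G s z))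
                            <= Rabs (coord i y - coord i z) * (L * dist1 y z)).
  { intros i; eapply Rle_trans; [apply Rle_abs|]; rewrite Rabs_mult.
    apply Rmult_le_compat_l; [apply Rabs_pos | apply HL]. }
  assert (Hsum : dot_diff y z (G s y) (G s z) <= L * Rsqr (dist1 y z)).
  { unfold dot_diff; pose proof (Hterm 0%nat); pose proof (Hterm 1%nat); pose proof (Hterm 2%nat);
    pose proof (Hterm 3%nat); pose proof (Hterm 4%nat).
    apply Rle_trans with (dist1 y z * (L * dist1 y z)); [unfold dist1 at 1; lra | right; unfold Rsqr; ring]. }
  pose proof (dist1_sq_le y z).
  assert (L * Rsqr (dist1 y z) <= L * (5 * sqdist y z)) by (apply Rmult_le_compat_l; auto); lra.
Qed.

Lemma is_derive_Rminus (f g : R -> R) (x df dg : R) :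
  is_derive f x df -> is_derive g x dg -> is_derive (fun s => f s - g s) x (df - dg).
Proof. apply (is_derive_minus f g). Qed.

Lemma is_derive_sqdist (y z : R -> Ystate) (dy dz : Ystate) (t : R) :
  (forall i, is_derive (fun s => coord i (y s)) t (coord i dy)) ->
  (forall i, is_derive (fun s => coord i (z s)) t (coord i dz)) ->
  is_derive (fun s => sqdist (y s) (z s)) t (2 * dot_diff (y t) (z t) dy dz).
Proof.
  intros Hy Hz.
  assert (Hi : forall i, is_derive (fun s => Rsqr (coord i (y s) - coord i (z s))) t
    (2 * ((coord i (y t) - coord i (z t)) * (coord i dy - coord i dz)))).
  { intros i; unfold Rsqr; eapply is_derive_value;
      [apply is_derive_Rmult; apply is_derive_Rminus; auto | cbv beta; ring]. }
  unfold sqdist, dot_diff; eapply is_derive_value;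
    [do 4 (apply is_derive_Rplus; [|apply Hi]); apply Hi | cbv beta; ring].
Qed.

Lemma right_continuous0_sqdist (y z : R -> Ystate) :
  (forall i, right_continuous0 (fun s => coord i (y s))) ->
  (forall i, right_continuous0 (fun s => coord i (z s))) ->
  right_continuous0 (fun s => sqdist (y s) (z s)).
Proof.
  intros Hy Hz; unfold sqdist, Rsqr.
  do 4 (apply right_continuous0_plus; [|apply right_continuous0_mult; apply right_continuous0_minus; auto]).
  apply right_continuous0_mult; apply right_continuous0_minus; auto.
Qed.

Theorem lipschitz_field_unique G L T (y z : R -> Ystate) : 0 <= L -> lipschitz_field G L -> y 0 = z 0 ->
  (forall i t, 0 < t < T -> is_derive (fun s => coord i (y s)) t (coord i (G t (y t)))) ->
  (forall i t, 0 < t < T -> is_derive (fun s => coord i (z s)) t (coord i (G t (z t)))) ->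
  (forall i, right_continuous0 (fun s => coord i (y s))) ->
  (forall i, right_continuous0 (fun s => coord i (z s))) ->
  forall t, 0 <= t < T -> y t = z t.
Proof.
  intros HL0 HL H0 Hy Hz Hry Hrz t Ht.
  pose proof (gronwall_le (fun s => sqdist (y s) (z s))
    (fun s => 2 * dot_diff (y s) (z s) (G s (y s)) (G s (z s))) (10 * L) T) as Hg.
  apply sqdist_le0; eapply Rle_trans; [apply Hg; auto|].
  - intros s Hs; apply is_derive_sqdist; intros i; auto.
  - intros s Hs; pose proof (dot_diff_lipschitz G L s (y s) (z s) HL0 HL); lra.
  - apply right_continuous0_sqdist; auto.
  - rewrite H0; unfold sqdist; rewrite !Rminus_diag; unfold Rsqr; lra.
Qed.

(** * Uniformly Lipschitz functions and cut-offs *)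

Definition unif_lipschitz (f : R -> Ystate -> R) : Prop :=
  exists L, 0 <= L /\ forall s y z, Rabs (f s y - f s z) <= L * dist1 y z.

Definition unif_bounded (f : R -> Ystate -> R) : Prop := exists M, forall s y, Rabs (f s y) <= M.

Lemma unif_lipschitz_coord i : unif_lipschitz (fun _ y => coord i y).
Proof. exists 1; split; [lra|]; intros; rewrite Rmult_1_l; apply coord_le_dist1. Qed.

Lemma unif_lipschitz_time (g : R -> R) : unif_lipschitz (fun s _ => g s).
Proof.
  exists 0; split; [lra|]; intros; rewrite Rminus_diag, Rabs_R0, Rmult_0_l; lra.
Qed.

Lemma unif_lipschitz_plus f g :
  unif_lipschitz f -> unif_lipschitz g -> unif_lipschitz (fun s y => f s y + g s y).
Proof.
  intros [Lf [Hf0 Hf]] [Lg [Hg0 Hg]]; exists (Lf + Lg); split; [lra|]; intros s y z.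
  replace (f s y + g s y - (f s z + g s z)) with ((f s y - f s z) + (g s y - g s z)) by ring.
  eapply Rle_trans; [apply Rabs_triang|]; pose proof (Hf s y z); pose proof (Hg s y z); lra.
Qed.

Lemma unif_lipschitz_opp f : unif_lipschitz f -> unif_lipschitz (fun s y => - f s y).
Proof.
  intros [L [HL0 HL]]; exists L; split; auto; intros s y z.
  replace (- f s y - - f s z) with (- (f s y - f s z)) by ring; rewrite Rabs_Ropp; apply HL.
Qed.

Lemma unif_lipschitz_scal k f : unif_lipschitz f -> unif_lipschitz (fun s y => k * f s y).
Proof.
  intros [L [HL0 HL]]; exists (Rabs k * L); split; [apply Rmult_le_pos; [apply Rabs_pos | auto]|].
  intros s y z; replace (k * f s y - k * f s z) with (k * (f s y - f s z)) by ring.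
  rewrite Rabs_mult, Rmult_assoc; apply Rmult_le_compat_l; [apply Rabs_pos | apply HL].
Qed.

Lemma unif_lipschitz_mult f g : unif_lipschitz f -> unif_lipschitz g ->
  unif_bounded f -> unif_bounded g -> unif_lipschitz (fun s y => f s y * g s y).
Proof.
  intros [Lf [Hf0 Hf]] [Lg [Hg0 Hg]] [Mf HMf] [Mg HMg].
  assert (HMf0 : 0 <= Mf) by (eapply Rle_trans; [apply Rabs_pos | apply (HMf 0 (of_coords (fun _ => 0)))]).
  assert (HMg0 : 0 <= Mg) by (eapply Rle_trans; [apply Rabs_pos | apply (HMg 0 (of_coords (fun _ => 0)))]).
  exists (Lf * Mg + Mf * Lg); split; [nra|]; intros s y z.
  replace (f s y * g s y - f s z * g s z) with ((f s y - f s z) * g s y + f s z * (g s y - g s z)) by ring.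
  eapply Rle_trans; [apply Rabs_triang|]; rewrite !Rabs_mult.
  pose proof (Hf s y z); pose proof (Hg s y z); pose proof (HMf s z); pose proof (HMg s y).
  pose proof (dist1_ge0 y z); pose proof (Rabs_pos (f s y - f s z)); pose proof (Rabs_pos (g s y)).
  pose proof (Rabs_pos (f s z)); pose proof (Rabs_pos (g s y - g s z)).
  assert (Rabs (f s y - f s z) * Rabs (g s y) <= Lf * dist1 y z * Mg) by (apply Rmult_le_compat; auto).
  assert (Rabs (f s z) * Rabs (g s y - g s z) <= Mf * (Lg * dist1 y z)) by (apply Rmult_le_compat; auto).
  lra.
Qed.

Lemma unif_bounded_time (g : R -> R) M : (forall s, Rabs (g s) <= M) -> unif_bounded (fun s _ => g s).
Proof. intros H; exists M; intros; apply H. Qed.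

Lemma unif_bounded_plus f g : unif_bounded f -> unif_bounded g -> unif_bounded (fun s y => f s y + g s y).
Proof.
  intros [Mf Hf] [Mg Hg]; exists (Mf + Mg); intros s y.
  eapply Rle_trans; [apply Rabs_triang | apply Rplus_le_compat; auto].
Qed.

Lemma lipschitz_field_of_coords G : (forall i, unif_lipschitz (fun s y => coord i (G s y))) ->
  exists L, 0 <= L /\ lipschitz_field G L.
Proof.
  intros H.
  destruct (H 0%nat) as [L0 [H00 H0]]; destruct (H 1%nat) as [L1 [H10 H1]];
  destruct (H 2%nat) as [L2 [H20 H2]]; destruct (H 3%nat) as [L3 [H30 H3]];
  destruct (H 4%nat) as [L4 [H40 H4]].
  exists (L0 + L1 + L2 + L3 + L4); split; [lra|]; intros s y z i.
  pose proof (dist1_ge0 y z).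
  destruct i as [|[|[|[|i]]]]; [ eapply Rle_trans; [apply H0|] | eapply Rle_trans; [apply H1|]
    | eapply Rle_trans; [apply H2|] | eapply Rle_trans; [apply H3|] | eapply Rle_trans; [apply (H4 s y z)|] ];
    apply Rmult_le_compat_r; lra.
Qed.

(* [clamp R0] and [sphere_scale] are the cut-offs making the Maxwell-Bloch field globally
   Lipschitz; [sphere_scale] equals 1 near S^2, since |u1| + |u2| + |u3| <= sqrt 3 there. *)
Definition clamp (R0 a : R) : R := Rmax (- R0) (Rmin R0 a).

Definition sphere_scale (Y : Ystate) : R :=
  Rmax 1 ((Rabs (coord 2 Y) + Rabs (coord 3 Y) + Rabs (coord 4 Y)) / 2).

Lemma clamp_id R0 a : Rabs a <= R0 -> clamp R0 a = a.
Proof.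
  intros H; unfold clamp, Rmax, Rmin; unfold Rabs in H; destruct Rcase_abs; repeat destruct Rle_dec; lra.
Qed.

Lemma unif_lipschitz_clamp R0 : unif_lipschitz (fun _ y => clamp R0 (coord 0 y)).
Proof.
  exists 1; split; [lra|]; intros s y z; rewrite Rmult_1_l.
  eapply Rle_trans; [|apply (coord_le_dist1 y z 0)].
  unfold clamp, Rmax, Rmin; repeat destruct Rle_dec; unfold Rabs; repeat destruct Rcase_abs; lra.
Qed.

Lemma unif_bounded_clamp R0 : 0 <= R0 -> unif_bounded (fun _ y => clamp R0 (coord 0 y)).
Proof.
  intros HR; exists R0; intros s y.
  unfold clamp, Rmax, Rmin; repeat destruct Rle_dec; unfold Rabs; repeat destruct Rcase_abs; lra.
Qed.

Lemma sphere_scale_ge1 Y : 1 <= sphere_scale Y.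
Proof. apply Rmax_l. Qed.

Lemma coord_le_sphere_scale Y i : (2 <= i)%nat -> Rabs (coord i Y) <= 2 * sphere_scale Y.
Proof.
  intros Hi; pose proof (Rmax_r 1 ((Rabs (coord 2 Y) + Rabs (coord 3 Y) + Rabs (coord 4 Y)) / 2)).
  fold (sphere_scale Y) in H.
  pose proof (Rabs_pos (coord 2 Y)); pose proof (Rabs_pos (coord 3 Y)); pose proof (Rabs_pos (coord 4 Y)).
  destruct i as [|[|[|[|i]]]]; try lia; cbn [coord] in *; lra.
Qed.

Lemma sphere_scale_lipschitz Y Z : Rabs (sphere_scale Y - sphere_scale Z) <= dist1 Y Z / 2.
Proof.
  unfold sphere_scale.
  assert (Hmax : forall a b, Rabs (Rmax 1 a - Rmax 1 b) <= Rabs (a - b)).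
  { intros a b; unfold Rmax; repeat destruct Rle_dec; unfold Rabs; repeat destruct Rcase_abs; lra. }
  eapply Rle_trans; [apply Hmax|].
  pose proof (Rabs_triang_inv (coord 2 Y) (coord 2 Z)); pose proof (Rabs_triang_inv (coord 2 Z) (coord 2 Y));
  pose proof (Rabs_triang_inv (coord 3 Y) (coord 3 Z)); pose proof (Rabs_triang_inv (coord 3 Z) (coord 3 Y));
  pose proof (Rabs_triang_inv (coord 4 Y) (coord 4 Z)); pose proof (Rabs_triang_inv (coord 4 Z) (coord 4 Y)).
  rewrite (Rabs_minus_sym (coord 2 Z)), (Rabs_minus_sym (coord 3 Z)), (Rabs_minus_sym (coord 4 Z)) in *.
  pose proof (Rabs_pos (coord 0 Y - coord 0 Z)); pose proof (Rabs_pos (coord 1 Y - coord 1 Z)).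
  unfold dist1; unfold Rabs at 1; destruct Rcase_abs; lra.
Qed.

Lemma scaled_coord_le Y i : (2 <= i)%nat -> Rabs (coord i Y / sphere_scale Y) <= 2.
Proof.
  intros Hi; pose proof (coord_le_sphere_scale Y i Hi); pose proof (sphere_scale_ge1 Y).
  unfold Rdiv; rewrite Rabs_mult, Rabs_inv, (Rabs_pos_eq (sphere_scale Y)) by lra.
  apply (Rmult_le_reg_r (sphere_scale Y)); [lra|]; rewrite Rmult_assoc, Rinv_l by lra; lra.
Qed.

Lemma unif_bounded_scaled_coord i : (2 <= i)%nat -> unif_bounded (fun _ y => coord i y / sphere_scale y).
Proof. intros Hi; exists 2; intros s y; apply scaled_coord_le, Hi. Qed.

Lemma unif_lipschitz_scaled_coord i : (2 <= i)%nat -> unif_lipschitz (fun _ y => coord i y / sphere_scale y).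
Proof.
  intros Hi; exists 2; split; [lra|]; intros s y z.
  pose proof (coord_le_dist1 y z i); pose proof (sphere_scale_lipschitz y z).
  pose proof (scaled_coord_le z i Hi) as Hb; pose proof (sphere_scale_ge1 y); pose proof (sphere_scale_ge1 z).
  set (a := coord i y) in *; set (b := coord i z) in *.
  set (ma := sphere_scale y) in *; set (mb := sphere_scale z) in *.
  replace (a / ma - b / mb) with ((a - b) / ma + (b / mb) * ((mb - ma) / ma)) by (field; lra).
  eapply Rle_trans; [apply Rabs_triang|]; rewrite Rabs_mult.
  unfold Rdiv in *; rewrite Rabs_mult in Hb; rewrite !Rabs_mult, Rabs_inv, (Rabs_pos_eq ma) by lra.
  assert (/ ma <= 1) by (rewrite <- Rinv_1; apply Rinv_le_contravar; lra).
  assert (0 < / ma) by (apply Rinv_0_lt_compat; lra).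
  rewrite (Rabs_minus_sym mb).
  pose proof (Rabs_pos (a - b)); pose proof (Rabs_pos (ma - mb));
  pose proof (Rmult_le_pos _ _ (Rabs_pos b) (Rabs_pos (/ mb))).
  assert (Rabs (a - b) * / ma <= Rabs (a - b)) by nra.
  assert (Rabs (ma - mb) * / ma <= Rabs (ma - mb)) by nra.
  assert (Rabs b * Rabs (/ mb) * (Rabs (ma - mb) * / ma) <= 2 * Rabs (ma - mb)) by nra.
  lra.
Qed.

(** * The Maxwell-Bloch field *)

Lemma damped_oscillator_energy (Om sig F T : R) (a b f : R -> R) : 0 <= sig ->
  (forall t, 0 < t < T -> is_derive a t (b t)) ->
  (forall t, 0 < t < T -> is_derive b t (- Om ^ 2 * a t - sig * b t + f t)) ->
  (forall t, 0 < t < T -> Rabs (f t) <= F) ->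
  right_continuous0 a -> right_continuous0 b ->
  forall t, 0 <= t < T -> Om ^ 2 * Rsqr (a t) <= (Rsqr (b 0) + Om ^ 2 * Rsqr (a 0) + Rsqr F) * exp t.
Proof.
  intros Hsig Ha Hb Hf Hra Hrb t Ht.
  set (E := fun s => Rsqr (b s) + Om ^ 2 * Rsqr (a s) + Rsqr F).
  assert (HE : E t <= E 0 * exp (1 * t)).
  { apply (gronwall_le E (fun s => 2 * b s * (- sig * b s + f s)) 1 T); auto.
    - intros s Hs; unfold E, Rsqr; eapply is_derive_value.
      + apply is_derive_Rplus; [apply is_derive_Rplus|apply (is_derive_const (K := R_AbsRing))].
        * apply is_derive_Rmult; apply Hb; auto.
        * apply is_derive_Rmult; [apply (is_derive_const (K := R_AbsRing))|].
          apply is_derive_Rmult; apply Ha; auto.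
      + unfold zero; simpl; ring.
    - intros s Hs; specialize (Hf s Hs).
      assert (Rsqr (f s) <= Rsqr F) by (rewrite Rsqr_abs; apply Rsqr_incr_1;
        [auto | apply Rabs_pos | eapply Rle_trans; [apply Rabs_pos | exact Hf]]).
      assert (0 <= Om ^ 2 * Rsqr (a s)) by (apply Rmult_le_pos; [apply pow2_ge_0 | apply Rle_0_sqr]).
      assert (0 <= sig * Rsqr (b s)) by (apply Rmult_le_pos; [lra | apply Rle_0_sqr]).
      pose proof (Rle_0_sqr (b s - f s)); unfold E, Rsqr in *; nra.
    - unfold E, Rsqr; apply right_continuous0_plus; [apply right_continuous0_plus|].
      + apply right_continuous0_mult; auto.
      + apply right_continuous0_mult; [apply right_continuous0_of_continuous, continuous_const|].
        apply right_continuous0_mult; auto.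
      + apply right_continuous0_of_continuous, continuous_const. }
  rewrite Rmult_1_l in HE; unfold E in HE; pose proof (Rle_0_sqr (b t)); pose proof (Rle_0_sqr F); lra.
Qed.

Lemma abs_le_of_energy (Om E N a t : R) : 0 < Om -> 0 <= E ->
  Om ^ 2 * Rsqr a <= E * exp t -> t <= N -> Rabs a <= 1 + E * exp N / Om ^ 2.
Proof.
  intros HO HE H Ht.
  assert (HO2 : 0 < Om ^ 2) by (apply pow_lt; auto).
  assert (Hx : Rsqr a <= E * exp N / Om ^ 2).
  { apply (Rmult_le_reg_l (Om ^ 2)); auto; unfold Rdiv.
    replace (Om ^ 2 * (E * exp N * / Om ^ 2)) with (E * exp N) by (field; lra).
    eapply Rle_trans; [exact H|]; apply Rmult_le_compat_l; auto; apply exp_le, Ht. }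
  rewrite Rsqr_abs in Hx; pose proof (Rabs_pos a); unfold Rsqr in Hx; nra.
Qed.

Section MaxwellBloch.

Variables (Om sig c hb p w1 w2 : R) (Ap : R -> R).

(* The reduced field in the coordinates (A, B, u1, u2, u3) of Y, with the driving amplitude
   [a] (= A + Ap t) and a rescaling [mu] (= 1) of the Bloch vector in the nonlinear terms
   left as parameters so that the cut-off field below is an instance. *)
Definition mb_field (a mu : R) (Y : Ystate) : Ystate :=
  ((coord 1 Y, - Om ^ 2 * coord 0 Y - sig * coord 1 Y + c * ((w2 - w1) * p) * (coord 3 Y / mu)),
   (((w2 - w1) * coord 3 Y - 2 * ((w2 - w1) * p / c / hb) * a * (coord 4 Y / mu),
     - (w2 - w1) * coord 2 Y),
    2 * ((w2 - w1) * p / c / hb) * a * (coord 2 Y / mu))).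

Definition reduced_field (Y : Ystate) (t : R) : Ystate := mb_field (coord 0 Y + Ap t) 1 Y.

Lemma dhopf_eq x1 y1 x2 y2 v1 z1 v2 z2 :
  dhopf ((x1, y1), (x2, y2)) ((v1, z1), (v2, z2)) =
  (2 * (v1 * x2 + x1 * v2 + z1 * y2 + y1 * z2), 2 * (v1 * y2 + x1 * z2 - z1 * x2 - y1 * v2),
   2 * (x1 * v1 + y1 * z1 - x2 * v2 - y2 * z2)).
Proof.
  unfold dhopf; simpl; f_equal; [f_equal|]; apply is_derive_unique; auto_derive; auto; ring.
Qed.

Lemma dPi_MBfield X t : dPi X (MBfield Om sig c hb p w1 w2 Ap X t) = reduced_field (Pi X) t.
Proof.
  destruct X as [[A B] [[x1 y1] [x2 y2]]].
  unfold MBfield, dPi, Pi, reduced_field, mb_field, imC1C2; simpl; rewrite dhopf_eq; simpl.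
  unfold Rdiv; rewrite Rinv_1; repeat (apply pair_equal_spec; split); ring.
Qed.

(* An explicit right inverse of the Hopf map, with a separate chart at the south pole. *)
Lemma hopf_surjective Y : onS2 (snd Y) -> exists X : Xstate, onS3 (snd X) /\ Pi X = Y.
Proof.
  destruct Y as [[A B] [[u1 u2] u3]]; simpl; intros H.
  destruct (Req_dec u3 (-1)) as [->|Hne].
  - assert (u1 = 0) by nra; assert (u2 = 0) by nra; subst.
    exists ((A, B), ((0, 0), (1, 0))); split; [simpl; ring|].
    unfold Pi; simpl; repeat (apply pair_equal_spec; split); ring.
  - assert (Hu3 : -1 < u3) by nra.
    set (r := sqrt ((1 + u3) / 2)).
    assert (Hr2 : r * r = (1 + u3) / 2) by (apply sqrt_sqrt; lra).
    assert (Hr : 0 < r) by (apply sqrt_lt_R0; lra).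
    assert (Hu : u1 ^ 2 + u2 ^ 2 = (1 - u3) * (1 + u3)) by lra.
    exists ((A, B), ((r, 0), (u1 / (2 * r), u2 / (2 * r)))); split; simpl.
    + transitivity (r * r + (u1 ^ 2 + u2 ^ 2) / (4 * (r * r))); [field; lra|].
      rewrite Hr2, Hu; field; lra.
    + unfold Pi; simpl; repeat (apply pair_equal_spec; split); try reflexivity; try (field; lra).
      transitivity (r * r - (u1 ^ 2 + u2 ^ 2) / (4 * (r * r))); [field; lra|].
      rewrite Hr2, Hu; field; lra.
Qed.

Lemma Fred_on_S2 Y t : onS2 (snd Y) -> Fred Om sig c hb p w1 w2 Ap Y t = reduced_field Y t.
Proof.
  intros H; unfold Fred.
  match goal with |- epsilon ?i ?P = _ =>
    assert (HP : exists W, P W) by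
      (destruct (hopf_surjective Y H) as [X [HX HXY]]; eexists; exists X; eauto);
    destruct (epsilon_spec i P HP) as [X [_ [HXY ->]]] end.
  rewrite dPi_MBfield, HXY; reflexivity.
Qed.

Definition sphere_sq (Y : Ystate) : R := Rsqr (coord 2 Y) + Rsqr (coord 3 Y) + Rsqr (coord 4 Y).

Lemma onS2_sphere_sq Y : onS2 (snd Y) <-> sphere_sq Y = 1.
Proof.
  destruct Y as [[A B] [[u1 u2] u3]]; unfold onS2, sphere_sq, Rsqr; simpl.
  split; intros H; lra.
Qed.

Lemma sphere_sq_invariant (a mu : R -> R) (Z : R -> Ystate) T :
  (forall i t, 0 < t < T -> is_derive (fun s => coord i (Z s)) t (coord i (mb_field (a t) (mu t) (Z t)))) ->
  (forall i, right_continuous0 (fun s => coord i (Z s))) ->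
  forall t, 0 <= t < T -> sphere_sq (Z t) = sphere_sq (Z 0).
Proof.
  intros Hd Hr; apply (derive0_const (fun s => sphere_sq (Z s))).
  - intros s Hs; unfold sphere_sq, Rsqr; eapply is_derive_value.
    + apply is_derive_Rplus; [apply is_derive_Rplus|]; apply is_derive_Rmult; apply Hd; auto.
    + simpl; unfold Rdiv; ring.
  - unfold sphere_sq, Rsqr.
    apply right_continuous0_plus; [apply right_continuous0_plus|]; apply right_continuous0_mult; auto.
Qed.

Hypothesis HAp : continuous_on nonnegR Ap.

Lemma continuous_Ap_clip N : 0 <= N -> forall s, continuous (fun s => Ap (clip N s)) s.
Proof.
  intros HN s P HP.
  specialize (HAp (clip N s) (proj1 (clip_range N s HN)) P HP).
  pose proof (continuous_clip N s _ HAp) as H1; unfold filtermap, within in *.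
  revert H1; apply filter_imp; intros x Hx; apply Hx, clip_range, HN.
Qed.

Lemma Ap_clip_bounded N : 0 <= N -> exists M, forall s, Rabs (Ap (clip N s)) <= M.
Proof.
  intros HN; destruct (continuous_bounded_on _ 0 N HN (continuous_Ap_clip N HN)) as [M HM].
  exists M; intros s; pose proof (clip_range N s HN).
  specialize (HM (clip N s) H); rewrite (clip_id N (clip N s)) in HM; auto.
Qed.

(* Coordinates of explicit tuples compute, coordinates of variables stay folded. *)
Local Arguments coord i !y.

Definition cutoff_field (R0 N s : R) (Y : Ystate) : Ystate :=
  mb_field (clamp R0 (coord 0 Y) + Ap (clip N s)) (sphere_scale Y) Y.

Lemma cutoff_field_lipschitz R0 N : 0 <= R0 -> 0 <= N ->
  exists L, 0 <= L /\ lipschitz_field (cutoff_field R0 N) L.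
Proof.
  intros HR0 HN; destruct (Ap_clip_bounded N HN) as [M HM].
  assert (Hl : unif_lipschitz (fun s y => clamp R0 (coord 0 y) + Ap (clip N s)))
    by (apply unif_lipschitz_plus; [apply unif_lipschitz_clamp | apply unif_lipschitz_time]).
  assert (Hb : unif_bounded (fun s y => clamp R0 (coord 0 y) + Ap (clip N s)))
    by (apply unif_bounded_plus; [apply unif_bounded_clamp, HR0 | apply (unif_bounded_time _ M HM)]).
  assert (Hnl : forall k i, (2 <= i)%nat ->
    unif_lipschitz (fun s y => k * (clamp R0 (coord 0 y) + Ap (clip N s)) * (coord i y / sphere_scale y))).
  { intros k i Hi; apply unif_lipschitz_mult.
    - apply unif_lipschitz_scal, Hl.
    - apply unif_lipschitz_scaled_coord, Hi.
    - destruct Hb as [Mb HMb]; exists (Rabs k * Mb); intros s y; rewrite Rabs_mult.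
      apply Rmult_le_compat_l; [apply Rabs_pos | apply HMb].
    - apply unif_bounded_scaled_coord, Hi. }
  apply lipschitz_field_of_coords; intros i; unfold cutoff_field, mb_field.
  destruct i as [|[|[|[|i]]]]; cbn [coord fst snd].
  - apply unif_lipschitz_coord.
  - apply unif_lipschitz_plus; [apply unif_lipschitz_plus; [|apply unif_lipschitz_opp]|].
    + apply unif_lipschitz_scal, unif_lipschitz_coord.
    + apply unif_lipschitz_scal, unif_lipschitz_coord.
    + apply unif_lipschitz_scal, unif_lipschitz_scaled_coord; lia.
  - apply unif_lipschitz_plus; [apply unif_lipschitz_scal, unif_lipschitz_coord|].
    apply unif_lipschitz_opp, Hnl; lia.
  - apply unif_lipschitz_scal, unif_lipschitz_coord.
  - apply Hnl; lia.
Qed.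

Lemma cutoff_field_time_continuous R0 N : 0 <= N -> time_continuous_field (cutoff_field R0 N).
Proof.
  intros HN Y i s; unfold cutoff_field, mb_field.
  assert (Hamp : forall k, continuous (fun s => k * (clamp R0 (coord 0 Y) + Ap (clip N s))) s).
  { intros k; apply continuous_Rmult_comp; [apply continuous_const|].
    apply continuous_Rplus_comp; [apply continuous_const | apply continuous_Ap_clip, HN]. }
  destruct i as [|[|[|[|i]]]]; cbn [coord fst snd]; try apply continuous_const.
  - apply continuous_Rplus_comp; [apply continuous_const|].
    apply continuous_Ropp_comp, continuous_Rmult_comp; [apply Hamp | apply continuous_const].
  - apply continuous_Rmult_comp; [apply Hamp | apply continuous_const].
Qed.

Lemma cutoff_field_reduced R0 N Y t : Rabs (coord 0 Y) <= R0 -> onS2 (snd Y) -> 0 <= t <= N ->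
  cutoff_field R0 N t Y = reduced_field Y t.
Proof.
  intros HA HS Ht; unfold cutoff_field, reduced_field.
  replace (sphere_scale Y) with 1.
  - rewrite clamp_id, clip_id by auto; reflexivity.
  - symmetry; unfold sphere_scale; apply Rmax_left.
    apply onS2_sphere_sq in HS; unfold sphere_sq in HS.
    rewrite !(Rsqr_abs (coord _ Y)) in HS.
    pose proof (Rabs_pos (coord 2 Y)); pose proof (Rabs_pos (coord 3 Y)); pose proof (Rabs_pos (coord 4 Y)).
    set (a := Rabs (coord 2 Y)) in *; set (b := Rabs (coord 3 Y)) in *; set (d := Rabs (coord 4 Y)) in *.
    pose proof (Rle_0_sqr (a - b)); pose proof (Rle_0_sqr (a - d)); pose proof (Rle_0_sqr (b - d)).
    assert (Hsq : Rsqr (a + b + d) <= 3) by (unfold Rsqr in *; lra).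
    unfold Rsqr in Hsq; nra.
Qed.

Hypothesis HOm : 0 < Om.
Hypothesis Hsig : 0 <= sig.

Definition energy0 (Y0 : Ystate) : R :=
  Rsqr (coord 1 Y0) + Om ^ 2 * Rsqr (coord 0 Y0) + Rsqr (2 * Rabs (c * ((w2 - w1) * p))).

Definition amplitude_bound (Y0 : Ystate) (N : R) : R := 1 + energy0 Y0 * exp N / Om ^ 2.

Lemma energy0_ge0 Y0 : 0 <= energy0 Y0.
Proof.
  unfold energy0; pose proof (pow2_ge_0 Om); pose proof (Rle_0_sqr (coord 0 Y0)).
  pose proof (Rle_0_sqr (coord 1 Y0)); pose proof (Rle_0_sqr (2 * Rabs (c * ((w2 - w1) * p)))).
  pose proof (Rmult_le_pos _ _ H H0); lra.
Qed.

Lemma amplitude_bound_ge0 Y0 N : 0 <= amplitude_bound Y0 N.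
Proof.
  unfold amplitude_bound; pose proof (energy0_ge0 Y0); pose proof (exp_pos N).
  assert (0 < Om ^ 2) by (apply pow_lt, HOm).
  pose proof (Rcomplements.Rdiv_le_0_compat (energy0 Y0 * exp N) (Om ^ 2) ltac:(nra) H1); lra.
Qed.

Lemma mb_amplitude_le (a mu : R -> R) (Z : R -> Ystate) T N :
  (forall i t, 0 < t < T -> is_derive (fun s => coord i (Z s)) t (coord i (mb_field (a t) (mu t) (Z t)))) ->
  (forall i, right_continuous0 (fun s => coord i (Z s))) ->
  (forall t, 0 < t < T -> Rabs (coord 3 (Z t) / mu t) <= 2) ->
  forall t, 0 <= t < T -> t <= N -> Rabs (coord 0 (Z t)) <= amplitude_bound (Z 0) N.
Proof.
  intros Hd Hr Hu t Ht HtN; apply abs_le_of_energy with t; auto; [apply energy0_ge0|].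
  apply (damped_oscillator_energy Om sig _ T (fun s => coord 0 (Z s)) (fun s => coord 1 (Z s))
           (fun s => c * ((w2 - w1) * p) * (coord 3 (Z s) / mu s)));
    [exact Hsig | | | | apply Hr | apply Hr | auto].
  - intros s Hs; apply (Hd 0%nat s Hs).
  - intros s Hs; apply (Hd 1%nat s Hs).
  - intros s Hs; rewrite Rabs_mult, (Rmult_comm 2).
    apply Rmult_le_compat_l; [apply Rabs_pos | apply Hu, Hs].
Qed.

Definition local_solution (Y0 : Ystate) (Z : R -> Ystate) (T : R) : Prop :=
  Z 0 = Y0 /\ (forall t, 0 <= t < T -> onS2 (snd (Z t))) /\
  (forall i t, 0 < t < T -> is_derive (fun s => coord i (Z s)) t (coord i (reduced_field (Z t) t))) /\
  (forall i, right_continuous0 (fun s => coord i (Z s))).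

Lemma local_solution_restrict Y0 Z T T' : T' <= T -> local_solution Y0 Z T -> local_solution Y0 Z T'.
Proof.
  intros HT [H0 [HS [Hd Hr]]]; split; [exact H0|]; split; [intros t Ht; apply HS; lra|].
  split; [intros i t Ht; apply Hd; lra | exact Hr].
Qed.

Lemma local_solution_cutoff Y0 Z T N : local_solution Y0 Z T -> T <= N ->
  forall i t, 0 < t < T ->
  is_derive (fun s => coord i (Z s)) t (coord i (cutoff_field (amplitude_bound Y0 N) N t (Z t))).
Proof.
  intros [H0 [HS [Hd Hr]]] HTN i t Ht.
  rewrite cutoff_field_reduced; [apply Hd, Ht | | apply HS; lra | lra].
  rewrite <- H0; apply (mb_amplitude_le (fun s => coord 0 (Z s) + Ap s) (fun _ => 1) Z T N); auto; try lra.
  intros s Hs; rewrite Rdiv_1; specialize (HS s ltac:(lra)); apply onS2_sphere_sq in HS.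
  unfold sphere_sq in HS; pose proof (Rle_0_sqr (coord 2 (Z s))); pose proof (Rle_0_sqr (coord 4 (Z s))).
  apply Rabs_le; unfold Rsqr in *; nra.
Qed.

Lemma local_solution_unique Y0 Z1 Z2 T : local_solution Y0 Z1 T -> local_solution Y0 Z2 T ->
  forall t, 0 <= t < T -> Z1 t = Z2 t.
Proof.
  intros H1 H2 t Ht.
  destruct (cutoff_field_lipschitz (amplitude_bound Y0 T) T (amplitude_bound_ge0 Y0 T) ltac:(lra))
    as [L [HL0 HL]].
  apply (lipschitz_field_unique (cutoff_field (amplitude_bound Y0 T) T) L T); auto.
  - destruct H1 as [-> _], H2 as [-> _]; reflexivity.
  - apply (local_solution_cutoff Y0 Z1 T T H1 (Rle_refl T)).
  - apply (local_solution_cutoff Y0 Z2 T T H2 (Rle_refl T)).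
  - apply H1.
  - apply H2.
Qed.

(* Solve the cut-off equation by Picard iteration; the invariance of S^2 and the energy bound
   show that the cut-offs are never active, so the solution solves the reduced equation. *)
Lemma local_existence Y0 N : onS2 (snd Y0) -> 0 <= N ->
  exists Z, local_solution Y0 Z N /\
    forall t, 0 <= t < N -> filterdiff Z (locally t) (fun h => scal h (reduced_field (Z t) t)).
Proof.
  intros HY0 HN; set (R0 := amplitude_bound Y0 N).
  destruct (cutoff_field_lipschitz R0 N (amplitude_bound_ge0 Y0 N) HN) as [L [HL0 HL]].
  destruct (picard_lindelof (cutoff_field R0 N) L N Y0 HL0 HN HL (cutoff_field_time_continuous R0 N HN))
    as [Z [HZ0 HZd]].
  assert (Hr : forall i, right_continuous0 (fun s => coord i (Z s))).
  { intros i; apply right_continuous0_of_continuous.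
    apply (ex_derive_continuous (K := R_AbsRing) (V := R_NormedModule)); eexists; apply HZd; lra. }
  assert (Hd : forall i t, 0 < t < N -> is_derive (fun s => coord i (Z s)) t
    (coord i (mb_field (clamp R0 (coord 0 (Z t)) + Ap (clip N t)) (sphere_scale (Z t)) (Z t))))
    by (intros i t Ht; apply HZd; lra).
  assert (HS : forall t, 0 <= t < N -> onS2 (snd (Z t))).
  { intros t Ht; apply onS2_sphere_sq; rewrite (sphere_sq_invariant _ _ Z N Hd Hr t Ht), HZ0.
    apply onS2_sphere_sq, HY0. }
  assert (HA : forall t, 0 <= t < N -> Rabs (coord 0 (Z t)) <= R0).
  { intros t Ht; unfold R0; rewrite <- HZ0.
    apply (mb_amplitude_le _ _ Z N N Hd Hr); try lra.
    intros s Hs; apply scaled_coord_le; lia. }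
  assert (Hred : forall t, 0 <= t < N -> cutoff_field R0 N t (Z t) = reduced_field (Z t) t)
    by (intros t Ht; apply cutoff_field_reduced; auto; lra).
  exists Z; split.
  - split; [exact HZ0|]; split; [exact HS|]; split; [|exact Hr].
    intros i t Ht; rewrite <- Hred by lra; apply HZd; lra.
  - intros t Ht; apply filterdiff_of_coords; intros i; rewrite <- Hred by auto; apply HZd; lra.
Qed.

Lemma local_of_reduced_solution Y0 Y T :
  reduced_solution Om sig c hb p w1 w2 Ap Y0 Y -> local_solution Y0 Y T.
Proof.
  intros [H0 [HS Hd]]; split; [exact H0|]; split; [intros t Ht; apply HS; lra|]; split.
  - intros i t Ht; rewrite <- Fred_on_S2 by (apply HS; lra).
    specialize (Hd t ltac:(lra)); rewrite within_nonneg_interior in Hd by lra.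
    apply (filterdiff_coord Y (locally t) _ i Hd).
  - apply (right_continuous0_of_filterdiff Y _ (Hd 0 (Rle_refl 0))).
Qed.

(* Y s is taken from the local solution on [0, s + 1]; local solutions agree where both live. *)
Lemma reduced_solution_exists Y0 : onS2 (snd Y0) ->
  exists Y, reduced_solution Om sig c hb p w1 w2 Ap Y0 Y.
Proof.
  intros HY0.
  assert (Hex : forall N, exists Z, 0 <= N -> local_solution Y0 Z N /\
    forall t, 0 <= t < N -> filterdiff Z (locally t) (fun h => scal h (reduced_field (Z t) t))).
  { intros N; destruct (Rle_dec 0 N) as [HN|HN].
    - destruct (local_existence Y0 N HY0 HN) as [Z HZ]; exists Z; auto.
    - exists (fun _ => Y0); intros; lra. }
  destruct (choice _ Hex) as [Zs HZs].
  assert (Hagree : forall N M t, 0 <= t -> t < N -> t < M -> Zs N t = Zs M t).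
  { intros N M t Ht HN HM.
    apply (local_solution_unique Y0 _ _ (Rmin N M)); [| | split; [auto | apply Rmin_glb_lt; auto]].
    - apply (local_solution_restrict Y0 _ N); [apply Rmin_l | apply HZs; lra].
    - apply (local_solution_restrict Y0 _ M); [apply Rmin_r | apply HZs; lra]. }
  assert (HS : forall t, 0 <= t -> onS2 (snd (Zs (t + 1) t)))
    by (intros t Ht; apply (HZs (t + 1) ltac:(lra)); lra).
  exists (fun s => Zs (s + 1) s); split; [|split; [exact HS|]].
  - rewrite Rplus_0_l; apply (HZs 1 ltac:(lra)).
  - intros t Ht; rewrite Fred_on_S2 by (apply HS, Ht).
    rewrite (Hagree (t + 1) (t + 2) t) by lra.
    apply (filterdiff_ext_loc (F := within nonnegR (locally t)) (Zs (t + 2))).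
    + exists (mkposreal 1 Rlt_0_1); intros s Hs Hs0; apply Rabs_lt_between in Hs; simpl in Hs.
      change (minus s t) with (s - t) in Hs; unfold nonnegR in Hs0; apply Hagree; lra.
    + intros x Hx; apply within_nonneg_lim in Hx; auto; subst x; apply Hagree; lra.
    + apply filterdiff_within_nonneg, (HZs (t + 2)); lra.
Qed.

End MaxwellBloch.

Theorem lemma3p1 (Om sig c hb p w1 w2 : R) (Ap : R -> R) :
  0 < Om -> 0 < sig -> 0 < c -> 0 < hb -> 0 < p -> w1 < w2 ->
  continuous_on nonnegR Ap ->
  forall Y0 : Ystate, onS2 (snd Y0) ->
  exists Y : R -> Ystate,
    reduced_solution Om sig c hb p w1 w2 Ap Y0 Y /\
    (forall Z : R -> Ystate, reduced_solution Om sig c hb p w1 w2 Ap Y0 Z ->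
       forall t, 0 <= t -> Z t = Y t).
Proof.
  intros HOm Hsig _ _ _ _ HAp Y0 HY0; apply Rlt_le in Hsig.
  destruct (reduced_solution_exists Om sig c hb p w1 w2 Ap HAp HOm Hsig Y0 HY0) as [Y HY].
  exists Y; split; [exact HY|]; intros Z HZ t Ht.
  apply (local_solution_unique Om sig c hb p w1 w2 Ap HAp HOm Hsig Y0 Z Y (t + 1));
    [apply (local_of_reduced_solution Om sig c hb p w1 w2 Ap) .. | lra]; assumption.
Qed.
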